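(* Let $K\ge0$ satisfy: $|K(u)|\le\bar K<\infty$, $\int_{\mathbb R}|K(u)|^sdu<\infty$ for some $s>2$, $K(u)=0$ for $|u|>1$, and $|K(u)-K(u')|\le\Lambda_1|u-u'|$ for all $u,u'\in\mathbb R$ with some $1\le\Lambda_1<\infty$. For $x\in[0,1]$ let $G_x=[-1,0]$ if $x=1$, $[-1,1]$ if $x\in(0,1)$, $[0,1]$ if $x=0$, and suppose $\mu(\{u\in G_x:K(u)>0\})>0$ for every $x\in[0,1]$ ($\mu$ Lebesgue measure). Let $$S_{T,x}=\frac1T\sum_{t=1}^TK_h(t/T-x)\begin{pmatrix}1&\frac{t/T-x}{h}\\ \frac{t/T-x}{h}&(\frac{t/T-x}{h})^2\end{pmatrix},$$ with $K_h(u)=K(u/h)/h$, $h=h_T>0$, $h\to0$, $Th\to\infty$. Then there exists $\lambda_0>0$ such that, for all $v\in\mathbb R^2$ and all sufficiently large $T$, $$\sup_{x\in[0,1]}\|S_{T,x}^{-1}v\|\le\frac1{\lambda_0}\|v\|,$$ where $\|\cdot\|$ is the Euclidean norm on $\mathbb R^2$. *)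

From HB Require Import structures.
From mathcomp Require Import all_boot all_order all_algebra.
From mathcomp Require Import all_classical all_reals all_analysis.
Set Implicit Arguments. Unset Strict Implicit. Unset Printing Implicit Defensive.
Import Order.TTheory GRing.Theory Num.Theory.
Import numFieldNormedType.Exports.
Local Open Scope classical_set_scope.
Local Open Scope ring_scope.

Definition Gset {R : realType} (x : R) : set R :=
  if x == 1 then [set u | -1 <= u <= 0]
  else if x == 0 then [set u | 0 <= u <= 1]
  else [set u | -1 <= u <= 1].

Definition Kh {R : realType} (K : R -> R) (h u : R) : R := K (u / h) / h.

Definition S_Tx {R : realType} (K : R -> R) (h : R) (T : nat) (x : R) : 'M[R]_2 :=
  \matrix_(i < 2, j < 2)
    (T%:R^-1 * \sum_(t < T)
        Kh K h (t.+1%:R / T%:R - x) * ((t.+1%:R / T%:R - x) / h) ^+ (i + j)).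

Definition enorm2 {R : realType} (v : 'cV[R]_2) : R :=
  Num.sqrt (\sum_(i < 2) v i 0 ^+ 2).

(* The quadratic form of S_{T,x} is
     y' S_{T,x} y = (1/T) sum_t K_h(t/T - x) (y_1 + y_2 w_t)^2,   w_t = (t/T - x)/h.
   By Lipschitz continuity and the positivity assumption at x = 0 and x = 1, K is
   bounded below by some c > 0 on an interval of length r inside [0, 1] and on one
   inside [-1, 0]; for x <= 1/2 the first, for x > 1/2 the second, only involves
   sample points t/T in [0, 1].  The two outer thirds of such an interval each
   contain at least T h r / 6 of the w_t once T h is large, and they are r/3 apart,
   so the line y_1 + y_2 w cannot be small on both of them.  This gives
   y' S_{T,x} y >= lambda0 |y|^2 uniformly in x, hence invertibility and, by
   Cauchy-Schwarz, |S_{T,x}^-1 v| <= |v| / lambda0. *)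

From HB Require Import structures.
From mathcomp Require Import all_boot all_order all_algebra.
From mathcomp Require Import all_classical all_reals all_analysis.
From mathcomp Require Import lra ring.

Set Implicit Arguments.
Unset Strict Implicit.
Unset Printing Implicit Defensive.
Import Order.TTheory GRing.Theory Num.Theory.
Import numFieldNormedType.Exports.
Local Open Scope classical_set_scope.
Local Open Scope ring_scope.

Section RealFieldInequalities.
Variable R : realFieldType.

Lemma sum_sqr_affine_ge (a b u v d : R) : -1 <= u -> v <= 1 -> 0 <= d <= v - u ->
  d ^+ 2 * (a ^+ 2 + b ^+ 2) <= 14 * ((a + b * u) ^+ 2 + (a + b * v) ^+ 2).
Proof.
move=> u_ge v_le /andP[d_ge0 d_le].
have u_sqr : u ^+ 2 <= 1 by nra.
have d_sqr : d ^+ 2 <= (v - u) ^+ 2 by nra.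
have gap_sqr : (v - u) ^+ 2 <= 4 by nra.
have diff : (v - u) ^+ 2 * b ^+ 2 <= 2 * ((a + b * u) ^+ 2 + (a + b * v) ^+ 2).
  rewrite -subr_ge0 (_ : _ - _ = (2 * a + b * u + b * v) ^+ 2) ?sqr_ge0 //; ring.
have shift : a ^+ 2 <= 2 * (a + b * u) ^+ 2 + 2 * (b ^+ 2 * u ^+ 2).
  rewrite -subr_ge0 (_ : _ - _ = (a + 2 * b * u) ^+ 2) ?sqr_ge0 //; ring.
have bu : b ^+ 2 * u ^+ 2 <= b ^+ 2 by rewrite ler_piMr ?sqr_ge0.
have := sqr_ge0 (a + b * u); have := sqr_ge0 (a + b * v); have := sqr_ge0 a; nra.
Qed.

Lemma count_nat_window (A B : R) (T : nat) : 0 <= A -> B <= T%:R ->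
  B - A - 1 <= \sum_(t < T | A <= t.+1%:R <= B) 1.
Proof.
move=> A_ge0 BT.
(* While T <= B the count is at least T - A; once past B it keeps B - A - 1. *)
suff [] : T%:R - A <= \sum_(t < T | A <= t.+1%:R <= B) 1 :> R \/
          B - A - 1 <= \sum_(t < T | A <= t.+1%:R <= B) 1 by lra.
elim: T {BT} => [|T IH]; first by left; rewrite big_ord0; lra.
rewrite big_mkcond big_ord_recr -big_mkcond /= -natr1.
set S := \sum_(t < T | _) 1 in IH *.
have S_ge0 : 0 <= S by apply: sumr_ge0.
case: ifP => [/andP[lo hi]|out]; first by case: IH => ?; [left|right]; lra.
have [lo|lo] := lerP A (T%:R + 1); last by left; lra.
move: out; rewrite lo /= => /negbT; rewrite -ltNge => hi.
by right; case: IH => ?; lra.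
Qed.

Lemma sum_disjoint_le (I : finType) (P Q : pred I) (g : I -> R) :
  (forall t, 0 <= g t) -> (forall t, P t -> ~~ Q t) ->
  \sum_(t | P t) g t + \sum_(t | Q t) g t <= \sum_t g t.
Proof.
move=> g_ge0 PQ; rewrite (big_mkcond P) (big_mkcond Q) -big_split.
apply: ler_sum => t _ /=; case: (boolP (P t)) => [/PQ/negbTE->|_]; rewrite ?addr0 ?add0r //.
by case: ifP.
Qed.

Lemma sum_blocks_pairwise_ge (I : finType) (P Q : pred I) (f : I -> R) (k N : R) :
  (forall t, 0 <= f t) -> 0 <= k ->
  (forall t t', P t -> Q t' -> k <= f t + f t') ->
  N <= \sum_(t | P t) 1 -> N <= \sum_(t | Q t) 1 ->
  N * (k / 2) <= \sum_(t | P t) f t + \sum_(t | Q t) f t.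
Proof.
move=> f_ge0 k_ge0 fPQ NP NQ.
have block_ge (S : pred I) : N <= \sum_(t | S t) 1 -> (forall t, S t -> k / 2 <= f t) ->
    N * (k / 2) <= \sum_(t | S t) f t.
  move=> NS fS; apply: (@le_trans _ _ ((\sum_(t | S t) 1) * (k / 2))).
    by rewrite ler_wpM2r // divr_ge0.
  by rewrite mulr_suml; apply: ler_sum => t /fS; rewrite mul1r.
have sum_ge0 (S : pred I) : 0 <= \sum_(t | S t) f t by exact: sumr_ge0.
(* Either f >= k / 2 on all of P, or f t0 < k / 2 for some t0 in P, and then
   f >= k / 2 on all of Q. *)
have [t0 /andP[Pt0 small]|big_P] := pickP [pred t | P t && (f t < k / 2)].
  have : N * (k / 2) <= \sum_(t | Q t) f t.
    by apply: block_ge => // t /(fPQ _ _ Pt0); lra.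
  by have := sum_ge0 P; lra.
have : N * (k / 2) <= \sum_(t | P t) f t.
  by apply: block_ge => // t Pt; have := big_P t; rewrite /= Pt /= => /negbT; rewrite -leNgt.
by have := sum_ge0 Q; lra.
Qed.

End RealFieldInequalities.

Lemma dotmx_gt0 (R : realDomainType) n (y : 'cV[R]_n) : y != 0 -> 0 < (y^T *m y) 0 0.
Proof.
have sq_ge0 k : 0 <= y^T 0 k * y k 0 by rewrite mxE -expr2 sqr_ge0.
move=> y_neq0; rewrite mxE lt0r sumr_ge0 ?andbT //.
apply: contra y_neq0 => /eqP sum0; apply/eqP/matrixP => i j.
have := psumr_eq0P (fun k _ => sq_ge0 k) sum0.
by rewrite ord1 => /(_ i isT); rewrite !mxE => /eqP; rewrite mulf_eq0 orbb => /eqP.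
Qed.

Lemma posdef_unitmx (R : numFieldType) n (S : 'M[R]_n) :
  (forall y : 'cV[R]_n, y != 0 -> 0 < (y^T *m S *m y) 0 0) -> S \in unitmx.
Proof.
move=> posdef; rewrite -unitmx_tr unitmxE unitfE; apply/negP => /det0P[z z_neq0 zS0].
have := posdef z^T; rewrite trmx_eq0 => /(_ z_neq0).
rewrite trmxK -mulmxA (_ : S *m z^T = 0) ?mulmx0 ?mxE ?ltxx //.
by rewrite -[S]trmxK -trmx_mul zS0 trmx0.
Qed.

Lemma mx2_mulvE (R : nzRingType) m (A : 'M[R]_(m, 2)) (y : 'cV[R]_2) (i : 'I_m) :
  (A *m y) i 0 = A i 0 * y 0 0 + A i 1 * y 1 0.
Proof.
by rewrite mxE big_ord_recl big_ord1 (_ : lift ord0 ord0 = 1) //; apply: val_inj.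
Qed.

Lemma mx2_dotE (R : nzRingType) (u v : 'cV[R]_2) :
  (u^T *m v) 0 0 = u 0 0 * v 0 0 + u 1 0 * v 1 0.
Proof. by rewrite mx2_mulvE !mxE. Qed.

Section Euclidean2.
Variable R : realType.

Lemma enorm2_sqr (v : 'cV[R]_2) : enorm2 v ^+ 2 = v 0 0 ^+ 2 + v 1 0 ^+ 2.
Proof.
rewrite sqr_sqrtr; last by apply: sumr_ge0 => i _; exact: sqr_ge0.
by rewrite big_ord_recl big_ord1 (_ : lift ord0 ord0 = 1) //; apply: val_inj.
Qed.

Lemma dotmx_le_enorm2 (u v : 'cV[R]_2) : (u^T *m v) 0 0 <= enorm2 u * enorm2 v.
Proof.
rewrite mx2_dotE -[enorm2 u]ger0_norm ?sqrtr_ge0 // -[enorm2 v]ger0_norm ?sqrtr_ge0 //.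
rewrite -!sqrtr_sqr !enorm2_sqr -sqrtrM ?addr_ge0 ?sqr_ge0 //.
have [d_le0|d_gt0] := lerP (u 0 0 * v 0 0 + u 1 0 * v 1 0) 0.
  by rewrite (le_trans d_le0) ?sqrtr_ge0.
rewrite -(ger0_norm (ltW d_gt0)) -sqrtr_sqr ler_sqrt ?mulr_ge0 ?addr_ge0 ?sqr_ge0 //.
rewrite -subr_ge0 (_ : _ - _ = (u 0 0 * v 1 0 - u 1 0 * v 0 0) ^+ 2) ?sqr_ge0 //; ring.
Qed.

Lemma coercive_invmx_enorm2 (S : 'M[R]_2) (lam : R) : 0 < lam ->
  (forall y : 'cV[R]_2, lam * enorm2 y ^+ 2 <= (y^T *m S *m y) 0 0) ->
  S \in unitmx /\ forall v, enorm2 (invmx S *m v) <= lam^-1 * enorm2 v.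
Proof.
move=> lam_gt0 coercive.
have S_unit : S \in unitmx.
  apply: posdef_unitmx => y /dotmx_gt0 y_gt0; apply: lt_le_trans (coercive y).
  by rewrite enorm2_sqr -mx2_dotE mulr_gt0.
split=> // v; set y := invmx S *m v.
have y_le : lam * enorm2 y ^+ 2 <= enorm2 y * enorm2 v.
  apply: le_trans (coercive y) _.
  by rewrite -mulmxA mulKVmx // dotmx_le_enorm2.
rewrite ler_pdivlMl //; have [y0|y_gt0] := eqVneq (enorm2 y) 0.
  by rewrite y0 mulr0 /enorm2 sqrtr_ge0.
rewrite -(@ler_pM2l _ (enorm2 y)) ?lt_def ?y_gt0 ?sqrtr_ge0 //.
by rewrite mulrCA -expr2.
Qed.

End Euclidean2.

(* [t : 'I_T] stands for the index t + 1 of the paper, as in [S_Tx]. *)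
Definition local_coord {R : realType} (T : nat) (x h : R) (t : nat) : R :=
  (t.+1%:R / T%:R - x) / h.

Section LocalCoordinates.
Variable R : realType.

Lemma S_Tx_quadratic_form (K : R -> R) (h : R) (T : nat) (x : R) (y : 'cV[R]_2) :
  (y^T *m S_Tx K h T x *m y) 0 0 = T%:R^-1 *
    \sum_(t < T) K (local_coord T x h t) / h * (y 0 0 + y 1 0 * local_coord T x h t) ^+ 2.
Proof.
rewrite -mulmxA mx2_dotE !mx2_mulvE !mxE /=.
rewrite (_ : (1 %% 2)%N = 1%N) // !mulrDr !(mulr_sumr, mulr_suml) -!big_split /=.
by apply: eq_bigr => t _; rewrite /Kh /local_coord; ring.
Qed.

Lemma local_coord_in_window (T : nat) (x h p q : R) (t : nat) : (0 < T)%N -> 0 < h ->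
  (p <= local_coord T x h t <= q) =
  (T%:R * (x + h * p) <= t.+1%:R <= T%:R * (x + h * q)).
Proof.
rewrite -(ltr0n R) => T_gt0 h_gt0.
rewrite /local_coord ler_pdivlMr // ler_pdivrMr // lerBrDl lerBlDl.
by rewrite ler_pdivlMr // ler_pdivrMr // ![_ * h]mulrC ![_ * T%:R]mulrC.
Qed.

Lemma count_local_coord (T : nat) (x h p q : R) :
  0 < h -> 0 <= x + h * p -> x + h * q <= 1 ->
  T%:R * h * (q - p) - 1 <= \sum_(t < T | p <= local_coord T x h t <= q) 1.
Proof.
move=> h_gt0 lo hi; case: T => [|T]; first by rewrite big_ord0 !mul0r sub0r lerN10.
rewrite (eq_bigl _ _ (fun t : 'I_T.+1 => local_coord_in_window x p q t (ltn0Sn T) h_gt0)).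
have len : T.+1%:R * (x + h * q) - T.+1%:R * (x + h * p) = T.+1%:R * h * (q - p).
  by ring.
by rewrite -len count_nat_window ?mulr_ge0 ?ler_piMr.
Qed.

End LocalCoordinates.

Lemma quad_form_window_ge (R : realType) (K : R -> R) (c r al h x : R) (T : nat) (a b : R) :
  (forall u, 0 <= K u) -> 0 < c -> 0 < r -> -1 <= al -> al + r <= 1 ->
  (forall u, al <= u <= al + r -> c <= K u) ->
  0 < h -> 0 <= x + h * al -> x + h * (al + r) <= 1 -> 6 <= T%:R * h * r ->
  c * r ^+ 3 / 1512 * (a ^+ 2 + b ^+ 2) <=
  T%:R^-1 * \sum_(t < T) K (local_coord T x h t) / h * (a + b * local_coord T x h t) ^+ 2.
Proof.
move=> K_ge0 c_gt0 r_gt0 al_ge al_le K_window h_gt0 x_lo x_hi Thr_ge.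
have T_gt0 : 0 < T%:R :> R.
  by rewrite ltr0n lt0n; apply: contraTneq Thr_ge => ->; rewrite !mul0r -ltNge ltr0n.
pose w := local_coord T x h; pose f t := (a + b * w t) ^+ 2.
pose L := [pred t : 'I_T | al <= w t <= al + r / 3].
pose M := [pred t : 'I_T | al + 2 * r / 3 <= w t <= al + r].
pose N := T%:R * h * r / 6.
have count p q : al <= p -> q <= al + r -> q - p = r / 3 ->
    N <= \sum_(t < T | p <= w t <= q) 1.
  move=> al_p q_ar len; apply: le_trans (count_local_coord T _ _ _); rewrite ?len /N.
  - by lra.
  - by [].
  - by apply: le_trans x_lo _; rewrite lerD2l ler_pM2l.
  - by apply: le_trans _ x_hi; rewrite lerD2l ler_pM2l.
have NL : N <= \sum_(t | L t) 1 by apply: count; lra.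
have NM : N <= \sum_(t | M t) 1 by apply: count; lra.
pose k := (r / 3) ^+ 2 / 14 * (a ^+ 2 + b ^+ 2).
have k_ge0 : 0 <= k by rewrite mulr_ge0 ?divr_ge0 ?addr_ge0 ?sqr_ge0.
have pair t t' : L t -> M t' -> k <= f t + f t'.
  move=> /andP[? ?] /andP[? ?].
  have lo : -1 <= w t by lra.
  have hi : w t' <= 1 by lra.
  have gap : 0 <= r / 3 <= w t' - w t by apply/andP; split; lra.
  by have := sum_sqr_affine_ge a b lo hi gap; rewrite /k /f; lra.
have blocks := sum_blocks_pairwise_ge (fun t => sqr_ge0 _) k_ge0 pair NL NM.
have kernel : c / h * (\sum_(t | L t) f t + \sum_(t | M t) f t) <=
    \sum_(t < T) K (w t) / h * f t.
  have weight t : al <= w t <= al + r -> c / h * f t <= K (w t) / h * f t.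
    move=> /K_window c_le; apply: ler_wpM2r; first exact: sqr_ge0.
    by rewrite ler_pM2r ?invr_gt0.
  apply: le_trans (sum_disjoint_le (P := L) (Q := M) _ _) => [| t | t].
  - rewrite mulrDr !mulr_sumr; apply: lerD; apply: ler_sum => t /andP[? ?];
      by apply: weight; lra.
  - by rewrite mulr_ge0 ?divr_ge0 ?sqr_ge0 // ltW.
  - by move=> /andP[_ ?]; apply/negP => /andP[? _]; lra.
have -> : c * r ^+ 3 / 1512 * (a ^+ 2 + b ^+ 2) = T%:R^-1 * (c / h * (N * (k / 2))).
  by rewrite /N /k; field; rewrite !lt0r_neq0.
apply: ler_wpM2l; first by rewrite invr_ge0 ltW.
by apply: le_trans kernel; apply: ler_wpM2l; rewrite // divr_ge0 // ltW.
Qed.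

Lemma S_Tx_coercive (R : realType) (K : R -> R) (c r al0 al1 h x : R) (T : nat) :
  (forall u, 0 <= K u) -> 0 < c -> 0 < r ->
  0 <= al0 -> al0 + r <= 1 -> (forall u, al0 <= u <= al0 + r -> c <= K u) ->
  -1 <= al1 -> al1 + r <= 0 -> (forall u, al1 <= u <= al1 + r -> c <= K u) ->
  0 < h -> h <= 2^-1 -> 6 <= T%:R * h * r -> 0 <= x <= 1 ->
  forall y : 'cV[R]_2, c * r ^+ 3 / 1512 * enorm2 y ^+ 2 <= (y^T *m S_Tx K h T x *m y) 0 0.
Proof.
move=> K_ge0 c_gt0 r_gt0 al0_ge al0_le K_al0 al1_ge al1_le K_al1.
move=> h_gt0 h_le Thr /andP[x_ge0 x_le] y; rewrite S_Tx_quadratic_form enorm2_sqr.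
have [x_le_half|x_gt_half] := lerP x 2^-1.
  have := ler_wpM2l (ltW h_gt0) al0_ge; have := ler_wpM2l (ltW h_gt0) al0_le.
  by move=> ? ?; apply: (quad_form_window_ge (al := al0)) => //; lra.
have := ler_wpM2l (ltW h_gt0) al1_ge; have := ler_wpM2l (ltW h_gt0) al1_le.
by move=> ? ?; apply: (quad_form_window_ge (al := al1)) => //; lra.
Qed.

Lemma measure_gt0_exists d (T : semiRingOfSetsType d) (R : realFieldType)
    (mu : {content set T -> \bar R}) (A : set T) :
  (0 < mu A)%E -> exists x, A x.
Proof.
move=> muA_gt0; apply: contrapT => /forallNP A0.
by move: muA_gt0; rewrite (_ : A = set0) ?measure0 ?ltxx //; apply/seteqP; split.
Qed.

Lemma lipschitz_window (R : realFieldType) (K : R -> R) (L lo hi u0 c r : R) :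
  (forall u u', `|K u - K u'| <= L * `|u - u'|) -> 0 <= L ->
  lo <= u0 <= hi -> c <= K u0 -> 0 <= r <= hi - lo -> L * r <= c / 2 ->
  exists al, [/\ lo <= al, al + r <= hi & forall u, al <= u <= al + r -> c / 2 <= K u].
Proof.
move=> K_lip L_ge0 /andP[lo_u0 u0_hi] c_le /andP[r_ge0 r_le] Lr.
exists (Num.min u0 (hi - r)); set al := Num.min _ _.
have [al_u0 al_hr] : al <= u0 /\ al <= hi - r by rewrite !ge_min !lexx orbT.
have lo_al : lo <= al by rewrite le_min lo_u0 /=; lra.
have u0_alr : u0 <= al + r by rewrite /al; case: (leP u0 (hi - r)) => _; lra.
split=> // [|u /andP[al_u u_alr]]; first by lra.
have near_u0 : `|u - u0| <= r by rewrite ler_norml; apply/andP; split; lra.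
have lip := K_lip u0 u; rewrite [`|u0 - u|]distrC in lip.
have := ler_wpM2l L_ge0 near_u0; have := ler_norm (K u0 - K u); lra.
Qed.

Theorem lemma7 (R : realType) (K : R -> R) (Kbar s Lambda1 : R) (h : nat -> R)
  (K_ge0 : forall u, 0 <= K u)
  (K_bnd : forall u, `|K u| <= Kbar)
  (s_gt2 : 2 < s)
  (K_Ls : (\int[lebesgue_measure]_u ((`|K u| `^ s)%:E) < +oo)%E)
  (K_supp : forall u, 1 < `|u| -> K u = 0)
  (Lambda1_ge1 : 1 <= Lambda1)
  (K_lip : forall u u', `|K u - K u'| <= Lambda1 * `|u - u'|)
  (K_pos : forall x : R, 0 <= x <= 1 ->
     (0 < lebesgue_measure (Gset x `&` [set u | (0 < K u)%R]))%E)
  (h_pos : forall T, 0 < h T)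
  (h_to0 : h @ \oo --> 0)
  (Th_infty : (fun T : nat => T%:R * h T) @ \oo --> +oo) :
  exists2 lambda0 : R, 0 < lambda0 &
    \forall T \near \oo, forall (x : R), 0 <= x <= 1 ->
      S_Tx K (h T) T x \in unitmx /\
      forall v : 'cV[R]_2,
        enorm2 (invmx (S_Tx K (h T) T x) *m v) <= lambda0^-1 * enorm2 v.
Proof.
have [u0 u0_in Ku0] : exists2 u, 0 <= u <= 1 & 0 < K u.
  have [u [+ Ku]] := measure_gt0_exists (K_pos 0 (introT andP (conj (lexx _) ler01))).
  by rewrite /Gset eq_sym oner_eq0 eqxx => u_in; exists u.
have [u1 u1_in Ku1] : exists2 u, -1 <= u <= 0 & 0 < K u.
  have [u [+ Ku]] := measure_gt0_exists (K_pos 1 (introT andP (conj ler01 (lexx _)))).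
  by rewrite /Gset eqxx => u_in; exists u.
pose c := Num.min (K u0) (K u1); pose r := Num.min (c / (2 * Lambda1)) 1.
have [c_u0 c_u1] : c <= K u0 /\ c <= K u1 by rewrite !ge_min !lexx orbT.
have c_gt0 : 0 < c by rewrite lt_min Ku0 Ku1.
have Lambda1_gt0 : 0 < Lambda1 by lra.
have r_gt0 : 0 < r by rewrite lt_min ltr01 andbT divr_gt0 ?mulr_gt0.
have [r_c r_le1] : r <= c / (2 * Lambda1) /\ r <= 1 by rewrite !ge_min !lexx orbT.
have Lr : Lambda1 * r <= c / 2 by move: r_c; rewrite ler_pdivlMr ?mulr_gt0 //; lra.
have [|al0 [al0_ge al0_le K_al0]] := lipschitz_window K_lip (ltW Lambda1_gt0) u0_in c_u0 _ Lr.
  by rewrite ltW //= subr0.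
have [|al1 [al1_ge al1_le K_al1]] := lipschitz_window K_lip (ltW Lambda1_gt0) u1_in c_u1 _ Lr.
  by rewrite ltW //= opprK add0r.
pose lam := c / 2 * r ^+ 3 / 1512.
have lam_gt0 : 0 < lam.
  by rewrite divr_gt0 ?ltr0n // mulr_gt0 ?exprn_gt0 // divr_gt0 ?ltr0n.
have half_gt0 : 0 < 2^-1 :> R by rewrite invr_gt0 ltr0n.
exists lam => //; near=> T => x x_in.
apply: coercive_invmx_enorm2 => //.
apply: (S_Tx_coercive (al0 := al0) (al1 := al1)) => //; first by rewrite divr_gt0 ?ltr0n.
  by near: T; exact: cvgr_le 0 h_to0 _ half_gt0.
by rewrite -ler_pdivrMr //; near: T; exact: cvgry_ge Th_infty (6 / r).
Unshelve. all: by end_near.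
Qed.
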